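(* Let $H$ be a bipartite multigraph with parts $A$ and $B$, both nonempty, and let $\alpha>0$. Suppose that for every nonempty subset $B'\subseteq B$, setting $A'=N(B')\subseteq A$, there exists a vertex $u\in A'$ with $d_{B'}(u)<\alpha$, where $d_{B'}(u)$ is the number of edges (with multiplicity) between $u$ and $B'$. Then $\alpha|A|>|B|$.
   Context: $N(B')$ denotes the set of vertices of $A$ adjacent to at least one vertex of $B'$. *)

From HB Require Import structures.
From mathcomp Require Import all_boot all_order all_algebra.
Set Implicit Arguments. Unset Strict Implicit. Unset Printing Implicit Defensive.

(* A bipartite multigraph with parts A and B is given by the edge multiplicity
   function m : A -> B -> nat (m a b = number of edges between a and b). *)

Definition degIn (A B : finType) (m : A -> B -> nat) (B' : {set B}) (u : A) : nat :=
  (\sum_(b in B') m u b)%N.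

Definition nbhd (A B : finType) (m : A -> B -> nat) (B' : {set B}) : {set A} :=
  [set a : A | [exists b in B', (0 < m a b)%N]].

From HB Require Import structures.
From mathcomp Require Import all_boot all_order all_algebra.
Set Implicit Arguments. Unset Strict Implicit. Unset Printing Implicit Defensive.
Import Order.TTheory GRing.Theory Num.Theory.
Local Open Scope ring_scope.

(* We show the stronger, local statement that every nonempty
   B' of B satisfies  |B'| < alpha |N(B')|,  by strong induction on |B'|;
   the theorem is the case B' = B, using |N(B)| <= |A|.
   Given B', the hypothesis provides u in N(B') with d_{B'}(u) < alpha.
   Split B' into the neighbours of u in B' and the rest B'' = B' \ N(u):
   - the first part has at most d_{B'}(u) < alpha elements, since each of
     its vertices contributes at least one edge to d_{B'}(u);
   - N(B'') avoids u, so |N(B'')| + 1 <= |N(B')|, and if B'' is nonempty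
     the induction hypothesis gives |B''| < alpha |N(B'')|.
   Adding up gives |B'| < alpha + alpha |N(B'')| <= alpha |N(B')|. *)

Definition support (A B : finType) (m : A -> B -> nat) (u : A) : {set B} :=
  [set b | (0 < m u b)%N].

(* Each neighbour of u in B' contributes at least one edge to d_{B'}(u). *)
Lemma card_support_le_degIn (A B : finType) (m : A -> B -> nat)
    (B' : {set B}) (u : A) :
  (#|B' :&: support m u| <= degIn m B' u)%N.
Proof.
rewrite /degIn -sum1_card [X in (_ <= X)%N](big_setID (support m u)) /=.
apply: leq_trans (leq_addr _ _); apply: leq_sum => b.
by rewrite !inE => /andP[_ ->].
Qed.

Lemma nbhd_meets_support (A B : finType) (m : A -> B -> nat)
    (B' : {set B}) (u : A) :
  u \in nbhd m B' -> B' :&: support m u != set0.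
Proof.
rewrite inE => /existsP[b /andP[b_in m_ub]].
by apply/set0Pn; exists b; rewrite !inE b_in m_ub.
Qed.

Lemma nbhd_setD_support (A B : finType) (m : A -> B -> nat)
    (B' : {set B}) (u : A) :
  nbhd m (B' :\: support m u) \subset nbhd m B' :\ u.
Proof.
apply/subsetP => a; rewrite !inE => /existsP[b /andP[]].
rewrite !inE => /andP[m_ub b_in] m_ab; apply/andP; split.
  by apply: contraNneq m_ub => eq_au; rewrite -eq_au m_ab.
by apply/existsP; exists b; rewrite b_in m_ab.
Qed.

Section NeighbourhoodBound.

Variables (R : realFieldType) (A B : finType) (m : A -> B -> nat).
Variables (alpha : R).
Hypothesis alpha_gt0 : 0 < alpha.
Hypothesis low_degree : forall B' : {set B}, B' != set0 ->
  exists2 u, u \in nbhd m B' & (degIn m B' u)%:R < alpha.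

Lemma card_lt_alpha_nbhd (B' : {set B}) :
  B' != set0 -> #|B'|%:R < alpha * #|nbhd m B'|%:R.
Proof.
elim: {B'}_.+1 {-2}B' (ltnSn #|B'|) => // n IH B' ltB'n B'_ne0.
have [u u_in deg_lt] := low_degree B'_ne0.
set B'' := B' :\: support m u.
have card_split : #|B'| = (#|B' :&: support m u| + #|B''|)%N.
  by rewrite cardsID.
have small_part : #|B' :&: support m u|%:R < alpha.
  by apply: le_lt_trans deg_lt; rewrite ler_nat card_support_le_degIn.
have nbhd_drop : (#|nbhd m B''|.+1 <= #|nbhd m B'|)%N.
  rewrite (cardsD1 u (nbhd m B')) u_in add1n ltnS.
  exact/subset_leq_card/nbhd_setD_support.
rewrite card_split natrD.
have [->|B''_ne0] := eqVneq B'' set0.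
  rewrite cards0 addr0 (lt_le_trans small_part) // ler_pMr // ler1n.
  exact: leq_ltn_trans nbhd_drop.
have ltB''n : (#|B''| < n)%N.
  rewrite -ltnS (leq_trans _ ltB'n) // ltnS card_split -{1}[#|B''|]add0n.
  by rewrite ltn_add2r lt0n cards_eq0 nbhd_meets_support.
apply: (lt_le_trans (ltrD small_part (IH B'' ltB''n B''_ne0))).
rewrite -[X in X + _]mulr1 -mulrDr; apply: ler_wpM2l; first exact: ltW.
by rewrite addrC natr1 ler_nat.
Qed.

End NeighbourhoodBound.

Theorem lemma4 (R : realFieldType) (A B : finType) (m : A -> B -> nat)
    (alpha : R) (halpha : 0 < alpha)
    (hA : (0 < #|A|)%N) (hB : (0 < #|B|)%N)
    (hyp : forall B' : {set B}, B' != set0 ->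
       exists2 u, u \in nbhd m B' & (degIn m B' u)%:R < alpha) :
  (#|B|)%:R < alpha * (#|A|)%:R.
Proof.
have setT_ne0 : [set: B] != set0 by rewrite -card_gt0 cardsT.
have := card_lt_alpha_nbhd halpha hyp setT_ne0; rewrite cardsT => lt_nbhd.
apply: lt_le_trans lt_nbhd _.
apply: ler_wpM2l; first exact: ltW.
by rewrite ler_nat max_card.
Qed.
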